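(* The map $f$ is a bijection from the set of all permutations onto $\widehat{\mathcal{A}}$, with inverse $g$; that is, $f(g(w))=w$ for all $w\in\widehat{\mathcal{A}}$ and $g(f(\pi))=\pi$ for all permutations $\pi$.
   Context: A permutation of length $n\ge1$ is a word $\pi=\pi_1\cdots\pi_n$ containing each of $1,\dots,n$ exactly once. A descent of $\pi$ is an index $i$ with $\pi_i>\pi_{i+1}$. A run of $\pi$ is a maximal consecutive increasing sequence of letters; for a letter $c$ of $\pi$, $d_\pi(c)$ denotes the index of the run containing $c$, i.e. $1$ plus the number of descents at indices before the position of $c$. Words are finite sequences over the positive integers; $\max(w)$ is the largest letter of $w$. $\widehat{\mathcal{A}}$ is the set of words $w$ such that (AC1) every $i\in\{1,\dots,\max(w)\}$ occurs in $w$, and (AC2) for every $i\in\{1,\dots,\max(w)-1\}$, the rightmost occurrence of $i$ in $w$ is preceded by an occurrence of $i+1$. For a word $w$ and letter $j$, $p_w(j)$ is the list of positions $i$ with $w_i=j$, in increasing order. Define $f(\pi)=d_\pi(1)d_\pi(2)\cdots d_\pi(n)$ for a permutation $\pi$ of length $n$, and $g(w)$ to be the concatenation $p_w(1)p_w(2)\cdots p_w(\max(w))$ for $w\in\widehat{\mathcal{A}}$. *)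

(* Words and permutations are represented as [seq nat];
   positions and letters are 1-based as in the paper. *)
From mathcomp Require Import all_boot.
Set Implicit Arguments. Unset Strict Implicit. Unset Printing Implicit Defensive.

Definition is_perm (s : seq nat) : bool :=
  (0 < size s) && perm_eq s (iota 1 (size s)).

Definition letter (w : seq nat) (i : nat) : nat := nth 0 w i.-1.

Definition run_index (s : seq nat) (c : nat) : nat :=
  (count (fun i => letter s i.+1 < letter s i) (iota 1 (index c s))).+1.

Definition f_map (s : seq nat) : seq nat := map (run_index s) (iota 1 (size s)).

Definition wmax (w : seq nat) : nat := foldr maxn 0 w.

(* 1-based position of the rightmost occurrence of i in w (assumes i \in w) *)
Definition last_pos (w : seq nat) (i : nat) : nat := size w - index i (rev w).

Definition AC1 (w : seq nat) : bool := all (fun i => i \in w) (iota 1 (wmax w)).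

Definition AC2 (w : seq nat) : bool :=
  all (fun i => i.+1 \in take (last_pos w i).-1 w) (iota 1 (wmax w).-1).

Definition inAhat (w : seq nat) : bool :=
  [&& 0 < size w, all (fun x => 0 < x) w, AC1 w & AC2 w].

Definition positions (w : seq nat) (j : nat) : seq nat :=
  [seq i <- iota 1 (size w) | letter w i == j].

Definition g_map (w : seq nat) : seq nat :=
  flatten [seq positions w j | j <- iota 1 (wmax w)].

From mathcomp Require Import all_boot zify.
Set Implicit Arguments. Unset Strict Implicit. Unset Printing Implicit Defensive.

(* Both maps factor through the decomposition of a permutation into maximal
   ascending runs B_1 ... B_m.  The letter of f(pi) at position c is the index
   of the run containing c, so the blocks of positions p_w(1), ..., p_w(m) of
   w = f(pi) are exactly the runs, and g concatenates them back into pi.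
   Conversely, for any word w the blocks p_w(j) are increasing, AC1 says none
   of them is empty, and AC2 says that each block ends above the start of the
   next one; so they are the maximal runs of g(w), whence f(g(w)) = w. *)

Lemma head_sorted_min (A : seq nat) x :
  sorted ltn A -> x \in A -> {in A, forall y, x <= y} -> head 0 A = x.
Proof.
case: A => // a A /= sortA; rewrite inE => /predU1P[-> // | xA] minx.
have := allP (order_path_min ltn_trans sortA) x xA.
by have := minx a (mem_head _ _); lia.
Qed.

Lemma last_sorted_max (A : seq nat) x :
  sorted ltn A -> x \in A -> {in A, forall y, y <= x} -> last 0 A = x.
Proof.
case/lastP: A => // A a; rewrite last_rcons -rev_sorted rev_rcons /= => sortA.
rewrite mem_rcons inE => /predU1P[-> // | xA] maxx.
have := allP (order_path_min (fun _ _ _ ba cb => ltn_trans cb ba) sortA) x.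
rewrite mem_rev => /(_ xA) /=.
by have := maxx a; rewrite mem_rcons mem_head => /(_ isT); lia.
Qed.

Lemma sorted_iota_succ (r : rel nat) a n :
  sorted r (iota a n) = all (fun i => r i i.+1) (iota a n.-1).
Proof. by elim: n a => [|[|n] IH] a //=; rewrite -IH. Qed.

Lemma leq_wmax (w : seq nat) x : x \in w -> x <= wmax w.
Proof.
elim: w => // a w IH; rewrite inE /= => /predU1P[-> | /IH]; first exact: leq_maxl.
by move/leq_trans; apply; apply: leq_maxr.
Qed.

Lemma wmax_leq (w : seq nat) b : {in w, forall x, x <= b} -> wmax w <= b.
Proof.
elim: w => //= a w IH le_wb; rewrite geq_max le_wb ?mem_head //=.
by apply: IH => x xw; apply: le_wb; rewrite inE xw orbT.
Qed.

Definition descents (s : seq nat) (k : nat) : nat :=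
  count (fun i => nth 0 s i.+1 < nth 0 s i) (iota 0 k).

Lemma run_indexE s c : run_index s c = (descents s (index c s)).+1.
Proof. by rewrite /run_index /descents -[1]addn0 iotaDl count_map. Qed.

Lemma descents_cons a s k : descents (a :: s) k.+1 = (head 0 s < a) + descents s k.
Proof. by rewrite /descents /= -[1]addn0 iotaDl count_map. Qed.

Lemma descents_cat_sorted (B t : seq nat) k :
  sorted ltn B -> k < size B -> descents (B ++ t) k = 0.
Proof.
elim: B k => // a B IH [|k] //= sortB ltkB.
rewrite descents_cons IH ?(path_sorted sortB) //.
by case: B {IH} sortB ltkB => //= b B /andP[ab _] _; rewrite ltnNge ltnW.
Qed.

Lemma descents_cat_descent (B t : seq nat) k :
  B != [::] -> sorted ltn B -> head 0 t < last 0 B ->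
  descents (B ++ t) (size B + k) = (descents t k).+1.
Proof.
elim: B => // a [|b B] IH _ /= sortB desc; rewrite addSn descents_cons.
  by rewrite desc.
case/andP: sortB => ab sortB.
by rewrite IH //= ltnNge ltnW.
Qed.

(* [bs] lists the maximal ascending runs of [flatten bs]. *)
Definition maximal_runs (bs : seq (seq nat)) : bool :=
  all (fun B => (B != [::]) && sorted ltn B) bs &&
  sorted (fun B C => head 0 C < last 0 B) bs.

Lemma maximal_runs_exist (s : seq nat) :
  uniq s -> exists2 bs, maximal_runs bs & flatten bs = s.
Proof.
elim: s => [|a s IH] /=; first by exists [::].
case/andP=> a_notin_s /IH[[|B bs] runs_bs flat_bs].
  by exists [:: [:: a]]; rewrite -?flat_bs.
case/andP: runs_bs => /= /andP[/andP[B_nil sortB] all_bs] sort_bs.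
case: B B_nil sortB sort_bs flat_bs => // b B _ /= sortB sort_bs flat_bs.
have /negPf a_neq_b : a != b.
  by apply: contraNneq a_notin_s => ->; rewrite -flat_bs mem_head.
case: (ltngtP a b) => [ab | ba | /eqP]; last by rewrite a_neq_b.
- exists ((a :: b :: B) :: bs); last by rewrite -flat_bs.
  by rewrite /maximal_runs /= ab sortB all_bs; case: bs sort_bs {all_bs flat_bs}.
- exists ([:: a] :: (b :: B) :: bs); last by rewrite -flat_bs.
  by rewrite /maximal_runs /= ba sortB all_bs.
Qed.

Lemma run_index_runs bs k x : maximal_runs bs -> uniq (flatten bs) ->
  k < size bs -> x \in nth [::] bs k -> run_index (flatten bs) x = k.+1.
Proof.
rewrite run_indexE; elim: bs k => // B bs IH k.
case/andP=> /= /andP[/andP[B_nil sortB] all_bs] sort_bs.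
rewrite cat_uniq => /and3P[_ B_disj uniq_bs].
case: k => [|k] /=.
  by move=> _ xB; rewrite index_cat xB descents_cat_sorted ?index_mem.
move=> lt_k_bs x_bs.
have xF : x \in flatten bs by apply/flattenP; exists (nth [::] bs k); rewrite ?mem_nth.
have xB : x \notin B by apply: contra B_disj => xB; apply/hasP; exists x.
rewrite index_cat (negPf xB) descents_cat_descent //.
  by rewrite -(IH k) // /maximal_runs all_bs (path_sorted sort_bs).
case: bs {IH x_bs xF B_disj uniq_bs} lt_k_bs all_bs sort_bs => //= C bs.
move=> _ /andP[/andP[C_nil _] _] /andP[desc _].
by case: C C_nil desc.
Qed.

Lemma map_letter_iota (w : seq nat) : map (letter w) (iota 1 (size w)) = w.
Proof. by rewrite -[1]addn0 iotaDl -map_comp; apply: mkseq_nth. Qed.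

Lemma letter_map_iota (F : nat -> nat) n x :
  0 < x <= n -> letter (map F (iota 1 n)) x = F x.
Proof.
move=> /andP[x_gt0 le_xn]; rewrite /letter (nth_map 0) ?size_iota ?nth_iota; try lia.
by rewrite add1n prednK.
Qed.

Lemma mem_positions (w : seq nat) j i :
  (i \in positions w j) = (0 < i <= size w) && (letter w i == j).
Proof. by rewrite mem_filter mem_iota add1n ltnS andbC. Qed.

Lemma sorted_positions (w : seq nat) j : sorted ltn (positions w j).
Proof. exact/sorted_filter/iota_ltn_sorted/ltn_trans. Qed.

Lemma positions_eq0 (w : seq nat) j : (positions w j != [::]) = (j \in w).
Proof.
by rewrite -has_filter -has_pred1 -[in RHS](map_letter_iota w) has_map.
Qed.

Lemma head_positions (w : seq nat) j :
  j \in w -> head 0 (positions w j) = (index j w).+1.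
Proof.
move=> jw; apply: head_sorted_min (sorted_positions w j) _ _.
  by rewrite mem_positions index_mem jw /letter /= nth_index.
move=> i; rewrite mem_positions /letter => /andP[/andP[i_gt0 le_iw] /eqP <-].
have lt_i : i.-1 < size w by lia.
by apply: leq_ltn_trans (index_nth 0 lt_i) _; lia.
Qed.

Lemma last_positions (w : seq nat) j :
  j \in w -> last 0 (positions w j) = last_pos w j.
Proof.
move=> jw; rewrite /last_pos.
have idx_lt : index j (rev w) < size w by rewrite -size_rev index_mem mem_rev.
apply: last_sorted_max (sorted_positions w j) _ _.
  rewrite mem_positions /letter; apply/andP; split; first lia.
  have -> : (size w - index j (rev w)).-1 = size w - (index j (rev w)).+1 by lia.
  by rewrite -nth_rev // nth_index // mem_rev.
move=> i; rewrite mem_positions /letter => /andP[/andP[i_gt0 le_iw] /eqP <-].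
have lt_k : size w - i < size (rev w) by rewrite size_rev; lia.
have := index_nth 0 lt_k; rewrite nth_rev; last by rewrite size_rev in lt_k.
have -> : size w - (size w - i).+1 = i.-1 by lia.
(* the two [index] terms differ only in an eqType instance, which [lia] would
   treat as distinct atoms *)
by set idx := index _ _; lia.
Qed.

Definition position_blocks (w : seq nat) : seq (seq nat) :=
  [seq positions w j | j <- iota 1 (wmax w)].

Lemma g_mapE w : g_map w = flatten (position_blocks w).
Proof. by []. Qed.

Lemma maximal_runs_position_blocks (w : seq nat) :
  maximal_runs (position_blocks w) = AC1 w && AC2 w.
Proof.
rewrite /maximal_runs all_map sorted_map sorted_iota_succ.
have -> : all (preim (positions w) (fun B => (B != [::]) && sorted ltn B))
            (iota 1 (wmax w)) = AC1 w.
  by apply: eq_all => j; rewrite /= positions_eq0 sorted_positions andbT.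
case ac1: (AC1 w) => //=; apply: eq_in_all => j; rewrite mem_iota => j_range.
have jw : j \in w by apply: (allP ac1); rewrite mem_iota; lia.
have j1w : j.+1 \in w by apply: (allP ac1); rewrite mem_iota; lia.
by rewrite /= head_positions // last_positions // in_take //; lia.
Qed.

Lemma position_blocks_eq (w : seq nat) (bs : seq (seq nat)) :
  all (fun B => (B != [::]) && sorted ltn B) bs ->
  flatten bs =i iota 1 (size w) ->
  (forall k i, k < size bs -> i \in nth [::] bs k -> letter w i = k.+1) ->
  position_blocks w = bs.
Proof.
move=> /all_nthP blocks_bs flat_bs letter_bs.
have in_block : forall i, 0 < i <= size w -> exists2 k, k < size bs & i \in nth [::] bs k.
  move=> i i_range; have : i \in flatten bs by rewrite flat_bs mem_iota; lia.
  by case/flattenP=> B /(nthP [::])[k lt_k <-]; exists k.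
have block_range : forall k i, k < size bs -> i \in nth [::] bs k -> 0 < i <= size w.
  move=> k i lt_k i_k; have : i \in iota 1 (size w).
    by rewrite -flat_bs; apply/flattenP; exists (nth [::] bs k); rewrite ?mem_nth.
  by rewrite mem_iota; lia.
have positions_bs : forall k, k < size bs -> positions w k.+1 = nth [::] bs k.
  move=> k lt_k; case/andP: (blocks_bs [::] k lt_k) => _ sort_k.
  apply: (irr_sorted_eq ltn_trans ltnn) => //; first exact: sorted_positions.
  move=> i; rewrite mem_positions; apply/andP/idP => [[/in_block[k' lt_k' i_k'] /eqP] | i_k].
    by rewrite (letter_bs k') // => -[<-].
  by rewrite (block_range k) // (letter_bs k).
have wmax_bs : wmax w = size bs.
  apply/eqP; rewrite eqn_leq; apply/andP; split.
    apply: wmax_leq => y; rewrite -(map_letter_iota w) => /mapP[i].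
    rewrite mem_iota add1n ltnS => /in_block[k lt_k i_k] ->.
    by rewrite (letter_bs k).
  case: (posnP (size bs)) => [-> // | bs_gt0].
  have lt_last : (size bs).-1 < size bs by rewrite prednK.
  case/andP: (blocks_bs [::] _ lt_last) => last_nil _.
  have i_last : head 0 (nth [::] bs (size bs).-1) \in nth [::] bs (size bs).-1.
    by rewrite -nth0 mem_nth // lt0n size_eq0.
  rewrite -(prednK bs_gt0) -(letter_bs _ _ lt_last i_last) leq_wmax //.
  have /andP[i_gt0 le_iw] := block_range _ _ lt_last i_last.
  by rewrite /letter mem_nth // prednK.
rewrite /position_blocks wmax_bs.
apply: (@eq_from_nth _ [::]) => [|k]; rewrite size_map size_iota // => lt_k.
by rewrite (nth_map 0) ?size_iota // nth_iota // add1n positions_bs.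
Qed.

Lemma letter_range (w : seq nat) i : all (fun x => 0 < x) w ->
  0 < i <= size w -> 0 < letter w i <= wmax w.
Proof.
move=> pos_w /andP[i_gt0 le_iw].
have iw : letter w i \in w by rewrite /letter mem_nth // prednK.
by rewrite (allP pos_w _ iw) leq_wmax.
Qed.

Lemma uniq_flatten_positions (w js : seq nat) :
  uniq js -> uniq (flatten [seq positions w j | j <- js]).
Proof.
elim: js => //= j js IH /andP[j_notin uniq_js].
rewrite cat_uniq filter_uniq ?iota_uniq ?IH // andbT; apply/hasPn => i.
case/flattenP=> _ /mapP[j' j'_js ->]; rewrite !mem_positions => /andP[_ /eqP i_j'].
by apply: contra j_notin => /andP[_ /eqP <-]; rewrite i_j'.
Qed.

Lemma perm_eq_g_map (w : seq nat) :
  all (fun x => 0 < x) w -> perm_eq (g_map w) (iota 1 (size w)).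
Proof.
move=> pos_w; apply: uniq_perm (uniq_flatten_positions _ (iota_uniq _ _)) (iota_uniq _ _) _.
move=> i; rewrite mem_iota add1n ltnS; apply/flattenP/idP.
  by case=> _ /mapP[j _ ->]; rewrite mem_positions => /andP[].
move=> i_range; exists (positions w (letter w i)); last by rewrite mem_positions i_range /=.
by apply: map_f; rewrite mem_iota add1n ltnS letter_range.
Qed.

Lemma f_map_perm (s : seq nat) :
  is_perm s -> inAhat (f_map s) /\ g_map (f_map s) = s.
Proof.
case/andP=> s_gt0 perm_s.
have uniq_s : uniq s by rewrite (perm_uniq perm_s) iota_uniq.
have [bs runs_bs flat_bs] := maximal_runs_exist uniq_s.
have size_fs : size (f_map s) = size s by rewrite size_map size_iota.
have blocks_fs : position_blocks (f_map s) = bs.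
  apply: position_blocks_eq => [|i|k i lt_k i_k]; first by case/andP: runs_bs.
    by rewrite flat_bs size_fs (perm_mem perm_s).
  have : i \in s by rewrite -flat_bs; apply/flattenP; exists (nth [::] bs k); rewrite ?mem_nth.
  rewrite (perm_mem perm_s) mem_iota add1n ltnS => i_range.
  by rewrite letter_map_iota // -flat_bs (run_index_runs runs_bs _ lt_k i_k) ?flat_bs.
split; last by rewrite g_mapE blocks_fs.
rewrite /inAhat size_fs s_gt0 -maximal_runs_position_blocks blocks_fs runs_bs andbT /=.
by rewrite all_map; apply/allP.
Qed.

Lemma g_map_Ahat (w : seq nat) :
  inAhat w -> is_perm (g_map w) /\ f_map (g_map w) = w.
Proof.
case/and4P=> w_gt0 pos_w ac1 ac2.
have perm_g := perm_eq_g_map pos_w.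
have runs_g : maximal_runs (position_blocks w) by rewrite maximal_runs_position_blocks ac1.
split; first by rewrite /is_perm (perm_size perm_g) size_iota w_gt0.
rewrite /f_map (perm_size perm_g) size_iota -[RHS]map_letter_iota.
apply/eq_in_map => i; rewrite mem_iota add1n ltnS => i_range.
have /andP[l_gt0 l_le] := letter_range pos_w i_range.
rewrite g_mapE (run_index_runs (k := (letter w i).-1)) ?prednK //.
- by rewrite -g_mapE (perm_uniq perm_g) iota_uniq.
- by rewrite /position_blocks size_map size_iota.
rewrite /position_blocks (nth_map 0) ?size_iota ?nth_iota ?add1n ?prednK //.
by rewrite mem_positions i_range /=.
Qed.

Theorem mainTheorem2 :
  (forall s : seq nat, is_perm s -> inAhat (f_map s) /\ g_map (f_map s) = s) /\
  (forall w : seq nat, inAhat w -> is_perm (g_map w) /\ f_map (g_map w) = w).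
Proof. by split; [exact: f_map_perm | exact: g_map_Ahat]. Qed.
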